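(* Let $\{A_i\}_{i\in I}$ be a finite set of ReCiPe agents with discrete-system representation $\langle\mathcal{V},\rho,\theta\rangle$ and let $\mathcal{T}=\|_{i\in I}\mathcal{T}(A_i)$. Then the system traces $s_0m_0s_1m_1\dots$ with $\theta(s_0)$ are exactly the paths $s_0,a_0,s_1,a_1,\dots$ of $\mathcal{T}$ all of whose labels are send labels, under the identification of the observation $m_t=\langle ch_t,{\bf d}_t,k,\pi_t\rangle$ with the label $a_t=({\bf d}_t,k,\pi_t,!,ch_t)$.
   Context: Fix a set $CV$ of common variables, a set $D$ of data variables, and a set $Ch$ of channels containing the broadcast channel $\star$; variables range over finite domains. A ReCiPe agent is $A_i=\langle V_i,f_i,g^i_s,g^i_r,\mathcal{T}^i_s,\mathcal{T}^i_r,\theta_i\rangle$: $V_i$ finite set of local variables (local state $s_i$ = assignment to $V_i$); $f_i:CV\to V_i$ renaming, also the assertion $\bigwedge_{cv}cv=f_i(cv)$; send guard $g^i_s(V_i,Ch,D,CV)$; receive guard $g^i_r(V_i,Ch)$ with $g^i_r(V_i,\star)=\mathsf{true}$; send/receive transition assertions $\mathcal{T}^i_s,\mathcal{T}^i_r$ over $(V_i,V_i',D,Ch)$ with $\forall v,{\bf d}\,\exists v'.\,\mathcal{T}^i_r(v,v',{\bf d},\star)$; initial assertion $\theta_i$. Predicates over $CV$ are identified with sets of assignments; $\pi(f_i^{-1}(s_i))$ means the assignment $cv\mapsto s_i(f_i(cv))$ satisfies $\pi$. CTS semantics $\mathcal{T}(A_i)$: states = local states, initial states those satisfying $\theta_i$,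 $\mathsf{ls}(s)=\{c:g^i_r(s,c)\}$, transitions $(s,({\bf d},i,\pi,!,c),s')$ iff $\mathcal{T}^i_s(s,s',{\bf d},c)$ and $\pi=g^i_s(s,c,{\bf d})$, and $(s,({\bf d},i',\pi,?,c),s')$ iff $\mathcal{T}^i_r(s,s',{\bf d},c)$, $i'\neq i$, $c\in\mathsf{ls}(s)$ and $\pi(f_i^{-1}(s))$. Parallel composition of CTSs: product states and initial states, union of listening sets, and transitions: a send $(\upsilon,!,c)$ by one component combined with either a receive $(\upsilon,?,c)$ of the other or, if the other does not listen to $c$, the other staying put; two receives combine, or a receive combines with a non-listening component staying put; on $\star$, a send or receive by one component combines with the other staying put when the other has no $(\upsilon,?,\star)$ transition. A path of a CTS is an infinite sequence $s_0,a_0,s_1,a_1,\dots$ with $s_0$ initial and each $(s_j,a_j,s_{j+1})$ a transition. Discrete representation: $\mathcal{V}=\bigcup_iV_i$, $\theta=\bigwedge_i\theta_i$. A system trace is an infinite sequence $s_0m_0s_1m_1\dots$ of global states and observations such that for all $t$: $m_t=\langle ch_t,{\bf d}_t,k,\pi_t\rangle$, $\pi_t=g^k_s(s^k_t,{\bf d}_t,ch_t)$, and $(s_t,s_{t+1})$ satisfies $\mathcal{T}^k_s(s^k_t,s^k_{t+1},{\bf d}_t,ch_t)\wedge\bigwedge_{j\neq k}\exists CV.\,f_j\wedge[(g^j_r(s^j_t,ch_t)\wedge\mathcal{T}^j_r(s^j_t,s^j_{t+1},{\bf d}_t,ch_t)\wedge\pi_t)\vee(\neg g^j_r(s^j_t,ch_t)\wedge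 s^j_t=s^j_{t+1})\vee(ch_t=\star\wedge\neg\pi_t\wedge s^j_t=s^j_{t+1})]$, where $s^j_t$ is the projection of $s_t$ to $V_j$. *)

From mathcomp Require Import all_boot.
Set Implicit Arguments. Unset Strict Implicit. Unset Printing Implicit Defensive.

Inductive dir := Snd | Rcv.

(* A ReCiPe agent over common variables CV, data variables D, channels Ch
   (with broadcast channel [star]) and values Val. *)
Record agent (CV D Ch Val : finType) (star : Ch) := Agent {
  aV : finType;
  af : CV -> aV;
  (* send guard g_s(s, c, d) : a predicate over CV *)
  ags : (aV -> Val) -> Ch -> (D -> Val) -> ((CV -> Val) -> Prop);
  (* receive guard g_r(s, c) *)
  agr : (aV -> Val) -> Ch -> Prop;
  (* send / receive transition assertions T(s, s', d, c) *)
  aTs : (aV -> Val) -> (aV -> Val) -> (D -> Val) -> Ch -> Prop;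
  aTr : (aV -> Val) -> (aV -> Val) -> (D -> Val) -> Ch -> Prop;
  atheta : (aV -> Val) -> Prop;
  agr_star : forall s, agr s star;
  aTr_star : forall v d, exists v', aTr v v' d star }.
Arguments agent : clear implicits.
Arguments aV {CV D Ch Val star} a.
Arguments af {CV D Ch Val star} a _.
Arguments ags {CV D Ch Val star} a _ _ _ _.
Arguments agr {CV D Ch Val star} a _ _.
Arguments aTs {CV D Ch Val star} a _ _ _ _.
Arguments aTr {CV D Ch Val star} a _ _ _ _.
Arguments atheta {CV D Ch Val star} a _.

Record cts (Ch U : Type) := CTS {
  St : Type;
  init : St -> Prop;
  ls : St -> Ch -> Prop;
  tr : St -> U * dir * Ch -> St -> Prop }.
Arguments St {Ch U} c.
Arguments init {Ch U} c _.
Arguments ls {Ch U} c _ _.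
Arguments tr {Ch U} c _ _ _.

Definition lab_u (CV D Val I : Type) : Type := ((D -> Val) * I * ((CV -> Val) -> Prop))%type.

Definition agent_cts (CV D Ch Val : finType) (star : Ch) (I : Type)
  (A : I -> agent CV D Ch Val star) (i : I) : cts Ch (lab_u CV D Val I) :=
  @CTS Ch (lab_u CV D Val I) (aV (A i) -> Val)
    (fun s => atheta (A i) s)
    (fun s c => agr (A i) s c)
    (fun s a s' =>
       let: (u, g, c) := a in
       let: (d, i', pi) := u in
       match g with
       | Snd => i' = i /\ aTs (A i) s s' d c /\ pi = ags (A i) s c d
       | Rcv => aTr (A i) s s' d c /\ i' <> i /\ agr (A i) s c
                /\ pi (fun cv => s (af (A i) cv))
       end).

Definition par (Ch U : Type) (star : Ch) (T1 T2 : cts Ch U) : cts Ch U :=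
  @CTS Ch U (St T1 * St T2)%type
    (fun s => init T1 s.1 /\ init T2 s.2)
    (fun s c => ls T1 s.1 c \/ ls T2 s.2 c)
    (fun s a s' =>
       let: (u, g, c) := a in
       (g = Snd /\
          ((tr T1 s.1 (u, Snd, c) s'.1 /\ tr T2 s.2 (u, Rcv, c) s'.2) \/
           (tr T1 s.1 (u, Rcv, c) s'.1 /\ tr T2 s.2 (u, Snd, c) s'.2)))
    \/ (g = Snd /\
          ((tr T1 s.1 (u, Snd, c) s'.1 /\ ~ ls T2 s.2 c /\ s'.2 = s.2) \/
           (tr T2 s.2 (u, Snd, c) s'.2 /\ ~ ls T1 s.1 c /\ s'.1 = s.1)))
    \/ (g = Rcv /\ tr T1 s.1 (u, Rcv, c) s'.1 /\ tr T2 s.2 (u, Rcv, c) s'.2)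
    \/ (g = Rcv /\
          ((tr T1 s.1 (u, Rcv, c) s'.1 /\ ~ ls T2 s.2 c /\ s'.2 = s.2) \/
           (tr T2 s.2 (u, Rcv, c) s'.2 /\ ~ ls T1 s.1 c /\ s'.1 = s.1)))
    \/ (c = star /\
          ((tr T1 s.1 (u, g, c) s'.1 /\ (forall x, ~ tr T2 s.2 (u, Rcv, star) x)
              /\ s'.2 = s.2) \/
           (tr T2 s.2 (u, g, c) s'.2 /\ (forall x, ~ tr T1 s.1 (u, Rcv, star) x)
              /\ s'.1 = s.1)))).

Definition unit_cts (Ch U : Type) : cts Ch U :=
  @CTS Ch U unit (fun _ => True) (fun _ _ => False) (fun _ _ _ => False).

Fixpoint comp_list (CV D Ch Val : finType) (star : Ch) (I : Type)
  (A : I -> agent CV D Ch Val star) (l : seq I) : cts Ch (lab_u CV D Val I) :=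
  match l with
  | [::] => unit_cts Ch (lab_u CV D Val I)
  | i :: l' => par star (agent_cts A i) (comp_list A l')
  end.

Definition system (CV D Ch Val : finType) (star : Ch) (I : finType)
  (A : I -> agent CV D Ch Val star) : cts Ch (lab_u CV D Val I) :=
  comp_list A (enum I).

Definition is_path (Ch U : Type) (T : cts Ch U) (s : nat -> St T) (a : nat -> U * dir * Ch) :=
  init T (s 0) /\ forall t, tr T (s t) (a t) (s t.+1).

Definition gstate (CV D Ch Val : finType) (star : Ch) (I : Type)
  (A : I -> agent CV D Ch Val star) : Type := forall i, aV (A i) -> Val.

Definition gtheta (CV D Ch Val : finType) (star : Ch) (I : Type)
  (A : I -> agent CV D Ch Val star) (g : gstate A) : Prop :=
  forall i, atheta (A i) (g i).

Fixpoint proj_list (CV D Ch Val : finType) (star : Ch) (I : Type)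
  (A : I -> agent CV D Ch Val star) (l : seq I) (g : gstate A) : St (comp_list A l) :=
  match l return St (comp_list A l) with
  | [::] => tt
  | i :: l' => (g i, proj_list l' g)
  end.

Definition proj_state (CV D Ch Val : finType) (star : Ch) (I : finType)
  (A : I -> agent CV D Ch Val star) (g : gstate A) : St (system A) :=
  proj_list (enum I) g.

Record obs (CV D Ch Val I : Type) := Obs {
  och : Ch; od : D -> Val; ok : I; opi : (CV -> Val) -> Prop }.

Definition obs_label (CV D Ch Val I : Type) (m : obs CV D Ch Val I)
  : lab_u CV D Val I * dir * Ch :=
  ((od m, ok m, opi m), Snd, och m).

Definition sys_trace (CV D Ch Val : finType) (star : Ch) (I : Type)
  (A : I -> agent CV D Ch Val star)
  (s : nat -> gstate A) (m : nat -> obs CV D Ch Val I) : Prop :=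
  forall t,
    let ch := och (m t) in let d := od (m t) in
    let k := ok (m t) in let pi := opi (m t) in
    pi = ags (A k) (s t k) ch d /\
    aTs (A k) (s t k) (s t.+1 k) d ch /\
    forall j, j <> k ->
      (agr (A j) (s t j) ch /\ aTr (A j) (s t j) (s t.+1 j) d ch
         /\ pi (fun cv => s t j (af (A j) cv)))
      \/ (~ agr (A j) (s t j) ch /\ s t.+1 j = s t j)
      \/ (ch = star /\ ~ pi (fun cv => s t j (af (A j) cv)) /\ s t.+1 j = s t j).

Arguments sys_trace {CV D Ch Val star I} A s m.
Arguments gtheta {CV D Ch Val star I} A g.
Arguments proj_state {CV D Ch Val star I} A g.
Arguments is_path {Ch U} T s a.

From mathcomp Require Import all_boot.
From Stdlib Require Import ClassicalEpsilon.

(* A send step of a binary composition is a send step of one component while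
   the other is passive: it receives the message, does not listen on the
   channel, or (on [star] only) has no matching receive transition.
   Passivity of a composition is componentwise passivity, so by induction
   over the agents a send step of T by agent k is a send step of A_k together
   with a passive step of every other agent.  For j <> k, passivity of T(A_j)
   is exactly the j-th conjunct of the discrete transition relation: receiving
   on [star] is always enabled and total, so A_j has no receive transition on
   [star] precisely when pi fails on its state.  Initial states also agree
   componentwise, and every state of T is the image of a global state, which
   gives the converse inclusion. *)

Section Composition.
Variables (Ch U : Type) (star : Ch).
Implicit Types T : cts Ch U.

Definition passive_step T (u : U) (c : Ch) (x x' : St T) : Prop :=
  tr T x (u, Rcv, c) x' \/ (~ ls T x c /\ x' = x)
  \/ (c = star /\ (forall y, ~ tr T x (u, Rcv, star) y) /\ x' = x).

Definition rcv_listening T : Prop :=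
  forall x u c y, tr T x (u, Rcv, c) y -> ls T x c.

Variables T1 T2 : cts Ch U.

Lemma par_rcv {u c x y} :
  tr (par star T1 T2) x (u, Rcv, c) y ->
  (exists z, tr T1 x.1 (u, Rcv, c) z) \/ (exists z, tr T2 x.2 (u, Rcv, c) z).
Proof.
by move=> [[//]|[[//]|[[_ [H _]]|[[_ [[H _]|[H _]]]|[_ [[H _]|[H _]]]]]]]; eauto.
Qed.

Lemma par_rcv_star u x :
  (exists z, tr T1 x.1 (u, Rcv, star) z) \/ (exists z, tr T2 x.2 (u, Rcv, star) z) ->
  exists y, tr (par star T1 T2) x (u, Rcv, star) y.
Proof.
case: x => x1 x2 /=.
have [[z1 H1]|N1] := classic (exists z, tr T1 x1 (u, Rcv, star) z);
have [[z2 H2]|N2] := classic (exists z, tr T2 x2 (u, Rcv, star) z).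
- by exists (z1, z2); right; right; left.
- exists (z1, x2); do 4 right; split=> //; left; split=> //.
  by split=> // w Hw; apply: N2; exists w.
- exists (x1, z2); do 4 right; split=> //; right; split=> //.
  by split=> // w Hw; apply: N1; exists w.
- by case.
Qed.

Lemma par_rcv_listening :
  rcv_listening T1 -> rcv_listening T2 -> rcv_listening (par star T1 T2).
Proof.
move=> L1 L2 x u c y /par_rcv [[z /L1]|[z /L2]] /=; tauto.
Qed.

(* A component that does not listen on [c] cannot receive on [c] either;
   this is what makes passivity compositional on [star]. *)
Hypotheses (L1 : rcv_listening T1) (L2 : rcv_listening T2).

Lemma par_passive_step u c x1 x2 x1' x2' :
  passive_step T1 u c x1 x1' /\ passive_step T2 u c x2 x2' <->
  passive_step (par star T1 T2) u c (x1, x2) (x1', x2').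
Proof.
split.
- case=> [[R1|[[N1 E1]|[C1 [S1 E1]]]] [R2|[[N2 E2]|[C2 [S2 E2]]]]].
  + by left; right; right; left.
  + by left; right; right; right; left; split=> //; left; rewrite E2.
  + by subst c; left; do 4 right; split=> //; left; rewrite E2.
  + by left; right; right; right; left; split=> //; right; rewrite E1.
  + by right; left; rewrite E1 E2; split=> //= -[]; [apply: N1|apply: N2].
  + subst c x1' x2'; right; right; split=> //; split=> // y /par_rcv.
    by case=> [[z /L1]|[z /S2]].
  + by subst c; left; do 4 right; split=> //; right; rewrite E1.
  + subst c x1' x2'; right; right; split=> //; split=> // y /par_rcv.
    by case=> [[z /S1]|[z /L2]].
  + subst c x1' x2'; right; right; split=> //; split=> // y /par_rcv.
    by case=> [[z /S1]|[z /S2]].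
- case=> [H|[[N E]|[-> [S E]]]].
  + case: H => [[E _]|[[E _]|[[_ [H1 H2]]|[[_ [[H1 [H2 E]]|[H2 [H1 E]]]]|[C [[H1 [H2 E]]|[H2 [H1 E]]]]]]]] //=.
    * by split; left.
    * by move: E => /= ->; split; [left|right; left].
    * by move: E => /= ->; split; [right; left|left].
    * by move: E => /= ->; split; [left|right; right].
    * by move: E => /= ->; split; [right; right|left].
  + by case: E => -> ->; split; right; left; split=> // H; apply: N; [left|right].
  + case: E => -> ->; split; right; right; split=> //; split=> // y Hy.
    * by have [|z /S] := @par_rcv_star u (x1, x2); first by left; exists y.
    * by have [|z /S] := @par_rcv_star u (x1, x2); first by right; exists y.
Qed.

Lemma par_send_step u c x1 x2 x1' x2' :
  (tr T1 x1 (u, Snd, c) x1' /\ passive_step T2 u c x2 x2') \/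
  (passive_step T1 u c x1 x1' /\ tr T2 x2 (u, Snd, c) x2') <->
  tr (par star T1 T2) (x1, x2) (u, Snd, c) (x1', x2').
Proof.
split.
- case=> [[H1 [R2|[[N2 E2]|[C2 [S2 E2]]]]]|[[R1|[[N1 E1]|[C1 [S1 E1]]]] H2]].
  + by left; split=> //; left.
  + by right; left; split=> //; left; rewrite E2.
  + by subst c; do 4 right; split=> //; left; rewrite E2.
  + by left; split=> //; right.
  + by right; left; split=> //; right; rewrite E1.
  + by subst c; do 4 right; split=> //; right; rewrite E1.
- case=> [[_ [[H1 H2]|[H1 H2]]]|[[_ [[H1 [N E]]|[H2 [N E]]]]|[[E _]|[[E _]|[C [[H1 [S E]]|[H2 [S E]]]]]]]] //; simpl in *.
  + by left; split=> //; left.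
  + by right; split=> //; left.
  + by left; split=> //; right; left.
  + by right; split=> //; right; left.
  + by left; split=> //; right; right.
  + by right; split=> //; right; right.
Qed.

End Composition.

Arguments passive_step {Ch U} star T u c x x'.
Arguments rcv_listening {Ch U} T.
Arguments par_rcv_listening {Ch U star T1 T2}.
Arguments par_passive_step {Ch U star T1 T2}.
Arguments par_send_step {Ch U star T1 T2}.

Section Agents.
Context {CV D Ch Val : finType} {star : Ch} {I : finType}.
Context {A : I -> agent CV D Ch Val star}.

Definition passive_agent_step (j : I) (d : D -> Val) (pi : (CV -> Val) -> Prop)
  (c : Ch) (x x' : aV (A j) -> Val) : Prop :=
  (agr (A j) x c /\ aTr (A j) x x' d c /\ pi (fun cv => x (af (A j) cv)))
  \/ (~ agr (A j) x c /\ x' = x)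
  \/ (c = star /\ ~ pi (fun cv => x (af (A j) cv)) /\ x' = x).

Definition discrete_step (g g' : gstate A) (m : obs CV D Ch Val I) : Prop :=
  let: Obs c d k pi := m in
  pi = ags (A k) (g k) c d /\ aTs (A k) (g k) (g' k) d c /\
  forall j, j <> k -> passive_agent_step j d pi c (g j) (g' j).

Lemma sys_traceE s m : sys_trace A s m <-> forall t, discrete_step (s t) (s t.+1) (m t).
Proof. by split=> H t; move: (H t); case: (m t). Qed.

Lemma agent_rcv_listening j : rcv_listening (agent_cts A j).
Proof. by move=> x [[d k] pi] c y /=; case=> _ [_ []]. Qed.

Lemma comp_list_rcv_listening l : rcv_listening (comp_list A l).
Proof.
elim: l => [|j l IH]; first by move=> ? ? ? ?.
exact: par_rcv_listening (agent_rcv_listening j) IH.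
Qed.

Lemma agent_passive_step j d k pi c x x' :
  k <> j ->
  passive_agent_step j d pi c x x' <-> passive_step star (agent_cts A j) (d, k, pi) c x x'.
Proof.
move=> nkj; split.
- case=> [[G [T P]]|[[N E]|[C [NP E]]]]; [by left|by right; left|].
  by subst c; right; right; split=> //; split=> // y [_ [_ [_ /NP]]].
- case=> [[T [_ [G P]]]|[[N E]|[C [S E]]]]; [by left|by right; left|].
  subst c; right; right; split=> //; split=> // P.
  have [y Hy] := aTr_star x d.
  by apply: (S y); do 3!split=> //; apply: agr_star.
Qed.

Lemma comp_list_send_mem l d k pi c x y :
  tr (comp_list A l) x ((d, k, pi), Snd, c) y -> k \in l.
Proof.
elim: l x y => [//|j l IH] [x1 x2] [y1 y2] /par_send_step [[H _]|[_ /IH]].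
- by case: H => ->; rewrite mem_head.
- by rewrite in_cons orbC => ->.
Qed.

Lemma comp_list_passive l d k pi c (g g' : gstate A) :
  k \notin l ->
  (forall j, j \in l -> passive_agent_step j d pi c (g j) (g' j)) <->
  passive_step star (comp_list A l) (d, k, pi) c (proj_list l g) (proj_list l g').
Proof.
elim: l => [|j l IH]; first by split=> // _; right; left; split.
rewrite in_cons negb_or => /andP [/eqP nkj kNl] /=.
rewrite -(par_passive_step (agent_rcv_listening j) (comp_list_rcv_listening l)).
rewrite -(IH kNl) -agent_passive_step //; split.
- by move=> H; split=> [|i Hi]; apply: H; rewrite in_cons ?eqxx ?Hi ?orbT.
- by case=> H1 H2 i; rewrite in_cons => /orP [/eqP ->|/H2].
Qed.

Lemma comp_list_send l d k pi c (g g' : gstate A) :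
  uniq l -> k \in l ->
  (pi = ags (A k) (g k) c d /\ aTs (A k) (g k) (g' k) d c /\
   forall j, j \in l -> j <> k -> passive_agent_step j d pi c (g j) (g' j)) <->
  tr (comp_list A l) (proj_list l g) ((d, k, pi), Snd, c) (proj_list l g').
Proof.
elim: l => [//|j l IH]; rewrite [uniq _]/= in_cons => /andP [jNl Ul].
rewrite -(@par_send_step _ _ star (agent_cts A j) (comp_list A l) _ _ (g j) _ (g' j)).
have [-> _|nkj /= kl] := eqVneq k j.
- rewrite -comp_list_passive //; split.
  + case=> P [T H]; left; split=> //; move=> i il; apply: H; first by rewrite in_cons il orbT.
    by move=> E; rewrite -E il in jNl.
  + case=> [[[_ [T P]] H]|[_ /comp_list_send_mem jl]]; last by rewrite jl in jNl.
    by do 2!split=> //; move=> i; rewrite in_cons => /orP [/eqP ->|/H].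
- rewrite -IH // -agent_passive_step; last by apply/eqP.
  split.
  + case=> P [T H]; right; split; first by apply: H; [rewrite mem_head|apply/eqP; rewrite eq_sym].
    by do 2!split=> //; move=> i il; apply: H; rewrite in_cons il orbT.
  + case=> [[[E _] _]|[H1 [P [T H2]]]]; first by rewrite E eqxx in nkj.
    by do 2!split=> //; move=> i; rewrite in_cons => /orP [/eqP ->|/H2].
Qed.

Lemma comp_list_init l (g : gstate A) :
  (forall j, j \in l -> atheta (A j) (g j)) <-> init (comp_list A l) (proj_list l g).
Proof.
elim: l => [//|j l IH] /=; rewrite -IH; split.
- by move=> H; split=> [|i il]; apply: H; rewrite in_cons ?eqxx ?il ?orbT.
- by case=> H1 H2 i; rewrite in_cons => /orP [/eqP ->|/H2].
Qed.

Lemma proj_list_ext l (g g' : gstate A) :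
  {in l, forall j, g j = g' j} -> proj_list l g = proj_list l g'.
Proof.
elim: l => [//|j l IH] /= H; rewrite H ?mem_head // IH // => i il.
by apply: H; rewrite in_cons il orbT.
Qed.

Lemma comp_list_component {l} (x : St (comp_list A l)) i :
  i \in l -> inhabited (aV (A i) -> Val).
Proof.
elim: l x => [//|j l IH] [x1 x2]; rewrite in_cons => /orP [/eqP ->|/(IH x2) //].
exact: inhabits x1.
Qed.

Lemma proj_list_surj {l} (g0 : gstate A) (x : St (comp_list A l)) :
  uniq l -> exists g, proj_list l g = x.
Proof.
elim: l x => [[] _|j l IH [x1 x2] /andP [jNl /(IH x2) [g <-]]]; first by exists g0.
exists (@dfwith I (fun i => aV (A i) -> Val) g j x1).
rewrite /= dfwith_in; congr pair; apply: proj_list_ext => i il.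
by rewrite dfwith_out //; apply: contraNneq jNl => ->.
Qed.

Lemma system_init g : gtheta A g <-> init (system A) (proj_state A g).
Proof.
rewrite -comp_list_init; split=> [H j _|H j]; [exact: H|exact: H (mem_enum I j)].
Qed.

Lemma system_send_step g g' m :
  discrete_step g g' m <-> tr (system A) (proj_state A g) (obs_label m) (proj_state A g').
Proof.
case: m => c d k pi; rewrite -comp_list_send ?enum_uniq ?mem_enum //=.
split=> -[P [T H]]; split=> //; split=> // j; [move=> _; exact: H|exact: H (mem_enum I j)].
Qed.

Lemma proj_state_surj (x : St (system A)) : exists g, proj_state A g = x.
Proof.
have inh i : inhabited (aV (A i) -> Val) := comp_list_component x i (mem_enum I i).
exact: proj_list_surj (fun i => epsilon (inh i) (fun _ => True)) x (enum_uniq I).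
Qed.

Definition send_obs (a : lab_u CV D Val I * dir * Ch) : obs CV D Ch Val I :=
  let: (d, k, pi, _, c) := a in Obs c d k pi.

Lemma send_obsK a : a.1.2 = Snd -> obs_label (send_obs a) = a.
Proof. by case: a => [[[[d k] pi] []] c]. Qed.

End Agents.

Theorem mainTheorem4 (CV D Ch Val : finType) (star : Ch) (I : finType)
  (A : I -> agent CV D Ch Val star) :
  (forall (s : nat -> gstate A) (m : nat -> obs CV D Ch Val I),
      sys_trace A s m -> gtheta A (s 0) ->
      is_path (system A) (fun t => proj_state A (s t)) (fun t => obs_label (m t)))
  /\
  (forall (p : nat -> St (system A)) (a : nat -> lab_u CV D Val I * dir * Ch),
      is_path (system A) p a -> (forall t, (a t).1.2 = Snd) ->
      exists (s : nat -> gstate A) (m : nat -> obs CV D Ch Val I),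
        sys_trace A s m /\ gtheta A (s 0) /\
        (forall t, p t = proj_state A (s t)) /\
        (forall t, a t = obs_label (m t))).
Proof.
split.
- move=> s m /sys_traceE steps /system_init init0.
  by split=> // t; apply/system_send_step.
- move=> p a [init0 steps] sends.
  have [s ps] := choice (fun t g => proj_state A g = p t) (fun t => proj_state_surj (p t)).
  have aE t : a t = obs_label (send_obs (a t)) by rewrite send_obsK.
  exists s, (fun t => send_obs (a t)); split; [|split; [|split]] => //.
  + by apply/sys_traceE => t; apply/system_send_step; rewrite !ps -aE.
  + by apply/system_init; rewrite ps.
Qed.
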